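(* Let $G$ be an $n\times n$ positive semidefinite matrix and $\beta\in(0,1]$. Then there is a subspace $W\subseteq\mathbb{R}^n$ with $\dim(W)\ge(1-\beta)n$ such that $w^TGw\le\frac1\beta w^T\mathrm{diag}(G)w$ for all $w\in W$.
   Context: $\mathrm{diag}(G)$ denotes the diagonal matrix with the same diagonal entries as $G$. *)

From HB Require Import structures.
From mathcomp Require Import all_boot all_order all_algebra.
From mathcomp Require Import reals.
Set Implicit Arguments. Unset Strict Implicit. Unset Printing Implicit Defensive.
Import Order.TTheory GRing.Theory Num.Theory.
Local Open Scope ring_scope.

Definition qform (R : ringType) (n : nat) (A : 'M[R]_n) (w : 'rV[R]_n) : R :=
  (w *m A *m w^T) 0 0.

Definition diagm (R : ringType) (n : nat) (G : 'M[R]_n) : 'M[R]_n :=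
  diag_mx (\row_i G i i).

Definition psd (R : realType) (n : nat) (G : 'M[R]_n) : Prop :=
  G^T = G /\ forall x : 'rV[R]_n, 0 <= qform G x.

(* Let D = diag(G) and B = beta G - D. Growing a B-positive-definite subspace
   U one B-orthogonal vector at a time until B is nonpositive on the
   B-orthogonal complement W of U gives dim U + dim W >= n, so it suffices
   that dim U <= beta n. Take a D-orthogonal basis s_1, ..., s_k of U; since
   beta s_i^T G s_i > s_i^T D s_i > 0, we get
   k / beta <= sum_i s_i^T G s_i / s_i^T D s_i = tr(G Q) with
   Q = sum_i s_i s_i^T / s_i^T D s_i. Bessel's inequality for the inner
   product D gives Q <= D^+, whence tr(G Q) <= tr(G D^+) <= n. *)

From HB Require Import structures.
From mathcomp Require Import all_boot all_order all_algebra.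
From mathcomp Require Import reals boolp lra.
Import Order.TTheory GRing.Theory Num.Theory.
Local Open Scope ring_scope.
Set Implicit Arguments. Unset Strict Implicit. Unset Printing Implicit Defensive.

Section BilinearForm.
Variables (R : comPzRingType) (n : nat).
Implicit Types (A : 'M[R]_n) (x y z : 'rV[R]_n).

Definition bform A x y : R := (x *m A *m y^T) 0 0.

Lemma bformDl A x y z : bform A (x + y) z = bform A x z + bform A y z.
Proof. by rewrite /bform !mulmxDl mxE. Qed.

Lemma bformZl A a x z : bform A (a *: x) z = a * bform A x z.
Proof. by rewrite /bform -!scalemxAl mxE. Qed.

Lemma bformDr A x y z : bform A z (x + y) = bform A z x + bform A z y.
Proof. by rewrite /bform linearD /= mulmxDr mxE. Qed.

Lemma bformZr A a x z : bform A z (a *: x) = a * bform A z x.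
Proof. by rewrite /bform linearZ /= -scalemxAr mxE. Qed.

Lemma bform0l A z : bform A 0 z = 0.
Proof. by rewrite /bform !mul0mx mxE. Qed.

Lemma bform0r A z : bform A z 0 = 0.
Proof. by rewrite /bform trmx0 mulmx0 mxE. Qed.

Lemma bformBZ a A B x y : bform (a *: A - B) x y = a * bform A x y - bform B x y.
Proof. by rewrite /bform mulmxBr mulmxBl -scalemxAr -scalemxAl !mxE. Qed.

Lemma bformC A x y : A^T = A -> bform A x y = bform A y x.
Proof.
move=> symA; rewrite /bform.
have -> : (x *m A *m y^T) 0 0 = ((x *m A *m y^T)^T) 0 0 by rewrite [RHS]mxE.
by rewrite !trmx_mul trmxK symA mulmxA.
Qed.

Lemma mulmx_trE m p (X : 'M[R]_(m, n)) A (Y : 'M[R]_(p, n)) i j :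
  (X *m A *m Y^T) i j = bform A (row i X) (row j Y).
Proof.
rewrite /bform !mxE; apply: eq_bigr => k _; rewrite !mxE; congr (_ * _).
by apply: eq_bigr => l _; rewrite !mxE.
Qed.

Lemma bform_delta A i j : bform A (delta_mx 0 i) (delta_mx 0 j) = A i j.
Proof. by rewrite /bform trmx_delta -rowE -colE !mxE. Qed.

Lemma bform_diag (d : 'rV[R]_n) x y :
  bform (diag_mx d) x y = \sum_j x 0 j * d 0 j * y 0 j.
Proof. by rewrite /bform mul_mx_diag mxE; apply: eq_bigr => j _; rewrite !mxE. Qed.

Lemma gram_pairwise_orthogonal k (s : seq 'rV[R]_n) A : A^T = A -> size s = k ->
  pairwise (fun u v => bform A u v == 0) s ->
  (\matrix_(i < k) s`_i) *m A *m (\matrix_(i < k) s`_i)^T =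
    diag_mx (\row_(i < k) bform A s`_i s`_i).
Proof.
move=> symA size_s orth_s.
have orth (i j : 'I_k) : (i < j)%N -> bform A s`_i s`_j = 0.
  by move=> lt_ij; apply/eqP/(pairwiseP 0 orth_s); rewrite ?inE ?size_s.
apply/matrixP => i j; rewrite mulmx_trE !rowK !mxE.
have [->|ij] := eqVneq i j; first by rewrite mulr1n.
rewrite mulr0n; have [/orth //|/orth|/val_inj eq_ij] := ltngtP i j.
  by rewrite bformC.
by rewrite eq_ij eqxx in ij.
Qed.

End BilinearForm.

Lemma qformE (R : comNzRingType) n (A : 'M[R]_n) x : qform A x = bform A x x.
Proof. by []. Qed.

Section OrthogonalComplement.
Variables (F : fieldType) (n : nat) (A : 'M[F]_n).
Implicit Types (U : {vspace 'rV[F]_n}) (u w : 'rV[F]_n).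

Definition basis_mx U : 'M[F]_(\dim U, n) := \matrix_i (vbasis U)`_i.

Definition orth_map U : 'Hom('rV[F]_n, 'rV[F]_(\dim U)) :=
  linfun (mulmxr (A *m (basis_mx U)^T)).

Definition orthv U : {vspace 'rV[F]_n} := lker (orth_map U).

Lemma dim_orthv U : (n <= \dim U + \dim (orthv U))%N.
Proof.
have := limg_ker_dim (orth_map U) fullv; have := dimvS (subvf (orth_map U @: fullv)).
rewrite capfv !dimvf /= !dim_matrix !mul1r -/(orthv U).
by move=> le_img dim_n; rewrite -[X in (X <= _)%N]dim_n addnC leq_add2r.
Qed.

Lemma bform_orthv U w u : w \in orthv U -> u \in U -> bform A w u = 0.
Proof.
rewrite memv_ker lfunE /= => /eqP wAU0 /coord_vbasis ->.
have orth_basis (i : 'I_(\dim U)) : bform A w (vbasis U)`_i = 0.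
  rewrite -[w](row_id 0) -[_`_i](rowK _ i : row i (basis_mx U) = _) -mulmx_trE.
  by rewrite -mulmxA wAU0 mxE.
elim/big_rec: _ => [|i v _ IHv]; first exact: bform0r.
by rewrite bformDr bformZr orth_basis IHv mulr0 add0r.
Qed.

Lemma orthv_line_cap_dim U u : (\dim U <= (\dim (U :&: orthv <[u]>)).+1)%N.
Proof.
set O := orthv <[u]>.
have le_line : (\dim <[u]> <= 1)%N by rewrite dim_vline leq_b1.
have le_sum : (\dim (U + O) <= (\dim O).+1)%N.
  apply: leq_trans (dimvS (subvf _)) _; rewrite dimvf /= dim_matrix mul1r.
  exact: leq_trans (dim_orthv <[u]>) (leq_add le_line (leqnn _)).
by rewrite -(leq_add2r (\dim O)) -dimv_sum_cap addnC addSn -addnS leq_add2l.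
Qed.

Lemma orthogonal_family U k : A^T = A -> (k <= \dim U)%N ->
  exists s : seq 'rV[F]_n, [/\ size s = k, {subset s <= U}, 0 \notin s &
    pairwise (fun u v => bform A u v == 0) s].
Proof.
move=> symA; elim: k U => [|k IHk] U leU; first by exists [::].
have U_neq0 : U != 0%VS by rewrite -dimv_eq0 -lt0n (leq_ltn_trans _ leU).
pose u := vpick U; pose U' := (U :&: orthv <[u]>)%VS.
have leU' : (k <= \dim U')%N by rewrite -ltnS (leq_trans leU) ?orthv_line_cap_dim.
have [s [size_s sU' s0 orth_s]] := IHk U' leU'.
exists (u :: s); split => /=; first by rewrite size_s.
- move=> v; rewrite inE => /predU1P [->|/sU' /memv_capP [] //]; exact: memv_pick.
- by rewrite inE negb_or eq_sym vpick0 U_neq0.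
- rewrite orth_s andbT; apply/allP => v /sU' /memv_capP [_ vU'].
  by rewrite bformC // (bform_orthv vU') ?memv_line.
Qed.

End OrthogonalComplement.

Section PositiveDefiniteSubspace.
Variables (R : realFieldType) (n : nat) (A : 'M[R]_n).
Hypothesis symA : A^T = A.
Implicit Types (U W : {vspace 'rV[R]_n}) (u w : 'rV[R]_n).

Definition posdef_on U := forall u, u \in U -> u != 0 -> 0 < bform A u u.

Lemma posdef_on0 : posdef_on 0%VS.
Proof. by move=> u; rewrite memv0 => /eqP ->; rewrite eqxx. Qed.

Lemma posdef_on_addv_line U w : posdef_on U -> w \in orthv A U ->
  0 < bform A w w -> posdef_on (U + <[w]>) /\ \dim (U + <[w]>) = (\dim U).+1.
Proof.
move=> posU wU' w_pos.
have w_neq0 : w != 0 by apply: contraTneq w_pos => ->; rewrite bform0l ltxx.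
have w_notin_U : w \notin U.
  by apply: contraTN w_pos => wU; rewrite (bform_orthv wU' wU) ltxx.
split; last first.
  rewrite dimv_disjoint_sum ?dim_vline; last first.
    apply/eqP; rewrite -subv0; apply/subvP => x /memv_capP [xU /vlineP [t xt]].
    by move: xU; rewrite xt rpredZeq (negbTE w_notin_U) orbF memv0 => /eqP ->; rewrite scale0r.
  by rewrite w_neq0 addn1.
move=> _ /memv_addP [u uU [_ /vlineP [t ->] ->]] x_neq0.
have uw0 : bform A u w = 0 by rewrite bformC // (bform_orthv wU').
rewrite bformDl !bformDr !bformZl !bformZr uw0 bformC // uw0 !mulr0 !addr0 add0r.
have [t0|t_neq0] := eqVneq t 0.
  by move: x_neq0; rewrite t0 scale0r addr0 mul0r addr0 => /(posU _ uU).
have u_ge0 : 0 <= bform A u u.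
  by have [->|/(posU _ uU)/ltW //] := eqVneq u 0; rewrite bform0l.
by rewrite ltr_wpDl // mulrA pmulr_rgt0 // -expr2 exprn_even_gt0.
Qed.

Lemma posdef_on_grow U : posdef_on U ->
  {in orthv A U, forall w, bform A w w <= 0} \/
  exists U', posdef_on U' /\ \dim U' = (\dim U).+1.
Proof.
move=> posU; have [|] := pselect {in orthv A U, forall w, bform A w w <= 0}; first by left.
move=> /existsNP [w /not_implyP [wU' /negP]]; rewrite -real_ltNge ?num_real // => w_pos.
by right; exists (U + <[w]>)%VS; apply: posdef_on_addv_line.
Qed.

Lemma posdef_nonpos_split : exists U W, [/\ posdef_on U,
  {in W, forall w, bform A w w <= 0} & (n <= \dim U + \dim W)%N].
Proof.
suff grow m U : (n - \dim U <= m)%N -> posdef_on U -> exists U' W, [/\ posdef_on U',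
    {in W, forall w, bform A w w <= 0} & (n <= \dim U' + \dim W)%N].
  exact: grow n 0%VS (leq_subr _ _) posdef_on0.
elim: m U => [|m IHm] U le_m posU;
  have [nonpos|[U' [posU' dimU']]] := posdef_on_grow posU;
  try by exists U, (orthv A U); split; last exact: dim_orthv.
- have := dimvS (subvf U'); rewrite dimU' dimvf /= dim_matrix mul1r.
  by move: le_m; rewrite leqn0 subn_eq0 => /leq_ltn_trans le_n /le_n; rewrite ltnn.
- by apply: IHm posU'; rewrite dimU' subnS -subn1 leq_subLR add1n.
Qed.

End PositiveDefiniteSubspace.

Section DiagonalPseudoInverse.
Variables (F : fieldType) (k : nat) (d : 'rV[F]_k).

(* As [0^-1 = 0], [pinv_mx] is the Moore-Penrose inverse of [diag_mx d] and
   [supp_mx] the projection onto its support. *)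
Definition pinv_mx : 'M[F]_k := diag_mx (map_mx GRing.inv d).
Definition supp_mx : 'M[F]_k := diag_mx (map_mx (fun x => (x != 0)%:R) d).

Let mulmx_diag_eq (a b c : 'rV[F]_k) :
  (forall j, a 0 j * b 0 j = c 0 j) -> diag_mx a *m diag_mx b = diag_mx c.
Proof. by move=> abc; rewrite mulmx_diag; congr diag_mx; apply/rowP => j; rewrite !mxE. Qed.

Lemma diag_pinv_mx : diag_mx d *m pinv_mx = supp_mx.
Proof.
by apply: mulmx_diag_eq => j; rewrite !mxE; case: eqVneq => [->|/mulfV]; rewrite ?mul0r.
Qed.

Lemma pinv_diag_mx : pinv_mx *m diag_mx d = supp_mx.
Proof.
by apply: mulmx_diag_eq => j; rewrite !mxE; case: eqVneq => [->|/mulVf]; rewrite ?mulr0.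
Qed.

Lemma supp_diag_mx : supp_mx *m diag_mx d = diag_mx d.
Proof.
by apply: mulmx_diag_eq => j; rewrite !mxE; case: eqVneq => [->|]; rewrite ?mulr0 ?mul1r.
Qed.

Lemma diag_supp_mx : diag_mx d *m supp_mx = diag_mx d.
Proof.
by apply: mulmx_diag_eq => j; rewrite !mxE; case: eqVneq => [->|]; rewrite ?mul0r ?mulr1.
Qed.

Lemma supp_pinv_mx : supp_mx *m pinv_mx = pinv_mx.
Proof.
by apply: mulmx_diag_eq => j; rewrite !mxE; case: eqVneq => [->|]; rewrite ?invr0 ?mulr0 ?mul1r.
Qed.

Lemma supp_mx_idem : supp_mx *m supp_mx = supp_mx.
Proof.
by apply: mulmx_diag_eq => j; rewrite !mxE; case: eqVneq; rewrite ?mulr0 ?mulr1.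
Qed.

End DiagonalPseudoInverse.

Lemma sub_pinv_factor (R : pzRingType) n (D E Q : 'M[R]_n) :
  Q *m D *m Q = Q -> Q *m D *m E = Q -> E *m D *m Q = Q ->
  (1%:M - Q *m D) *m E *m (1%:M - D *m Q) = E - Q.
Proof.
move=> QDQ QDE EDQ.
by rewrite mulmxBl mul1mx !mulmxBr !mulmx1 !mulmxA QDE !mulmxBl EDQ QDQ subrr subr0.
Qed.

Lemma mxtrace_mul_tr_diag (R : comPzRingType) n k (A : 'M[R]_n) (X : 'M[R]_(k, n)) t :
  \tr (A *m (X^T *m diag_mx t *m X)) = \sum_i (X *m A *m X^T) i i * t 0 i.
Proof.
rewrite !mulmxA mxtrace_mulC !mulmxA /mxtrace.
by apply: eq_bigr => i _; rewrite mul_mx_diag mxE.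
Qed.

Section PositiveSemidefinite.
Variables (R : realFieldType) (n : nat) (G : 'M[R]_n).
Hypothesis symG : G^T = G.
Hypothesis psdG : forall x, 0 <= qform G x.

Lemma psd_diag_ge0 i : 0 <= G i i.
Proof. by rewrite -bform_delta -qformE. Qed.

Lemma psd_diag_eq0 i j : G i i = 0 -> G i j = 0.
Proof.
move=> Gii0; apply/eqP/negP => /negP Gij_neq0.
have lin t : 0 <= t * (2 * G i j) + G j j.
  have := psdG (t *: delta_mx 0 i + delta_mx 0 j).
  rewrite qformE bformDl !bformDr !bformZl !bformZr !bform_delta Gii0.
  have -> : G j i = G i j by rewrite -[in LHS]symG mxE.
  lra.
have := lin (- (G j j + 1) / (2 * G i j)).
rewrite divfK ?mulf_neq0 ?pnatr_eq0 //; lra.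
Qed.

Lemma bform_diagmE x : bform (diagm G) x x = \sum_j x 0 j ^+ 2 * G j j.
Proof. by rewrite bform_diag; apply: eq_bigr => j _; rewrite mxE mulrAC expr2. Qed.

Lemma diagm_psd x : 0 <= bform (diagm G) x x.
Proof. by rewrite bform_diagmE sumr_ge0 // => j _; rewrite mulr_ge0 ?sqr_ge0 ?psd_diag_ge0. Qed.

Lemma bform_diagm_eq0 x : bform (diagm G) x x = 0 -> bform G x x = 0.
Proof.
rewrite bform_diagmE => /eqP; rewrite psumr_eq0 => [/allP xGx0|j _]; last first.
  by rewrite mulr_ge0 ?sqr_ge0 ?psd_diag_ge0.
have xG0 : x *m G = 0.
  apply/rowP => l; rewrite !mxE big1 // => j _.
  move: (xGx0 j (mem_index_enum j)); rewrite mulf_eq0 sqrf_eq0.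
  by case/orP => /eqP; [move->; rewrite mul0r | move/psd_diag_eq0->; rewrite mulr0].
by rewrite /bform xG0 mul0mx mxE.
Qed.

Lemma mxtrace_psd_congr_ge0 p (M : 'M[R]_(p, n)) (e : 'rV[R]_p) :
  (forall j, 0 <= e 0 j) -> 0 <= \tr (G *m (M^T *m diag_mx e *m M)).
Proof.
move=> e_ge0; rewrite mxtrace_mul_tr_diag; apply: sumr_ge0 => j _.
by rewrite mulr_ge0 // mulmx_trE; exact: psdG.
Qed.

Lemma mxtrace_pinv_proj_le (d : 'rV[R]_n) k (Y : 'M[R]_(k, n)) (s : 'rV[R]_k) :
  (forall j, 0 <= d 0 j) -> Y *m supp_mx d = Y -> Y *m diag_mx d *m Y^T = diag_mx s ->
  \tr (G *m (Y^T *m pinv_mx s *m Y)) <= \tr (G *m pinv_mx d).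
Proof.
(* Bessel's inequality: [E - Q = M^T E M] for [M = 1 - D Q], and [E >= 0]. *)
move=> d_ge0 YP YDY; set D := diag_mx d; set E := pinv_mx d.
set Q := Y^T *m pinv_mx s *m Y.
have QT : Q^T = Q by rewrite /Q !trmx_mul trmxK tr_diag_mx mulmxA.
have QDQ : Q *m D *m Q = Q.
  have -> : Q *m D *m Q = Y^T *m (pinv_mx s *m (Y *m D *m Y^T) *m pinv_mx s) *m Y.
    by rewrite /Q !mulmxA.
  by rewrite YDY pinv_diag_mx supp_pinv_mx.
have QDE : Q *m D *m E = Q by rewrite -mulmxA diag_pinv_mx /Q -mulmxA YP.
have EDQ : E *m D *m Q = Q.
  by rewrite pinv_diag_mx /Q !mulmxA -[supp_mx d]tr_diag_mx -trmx_mul YP.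
have MT : (1%:M - D *m Q)^T = 1%:M - Q *m D.
  by rewrite linearB /= trmx1 trmx_mul QT tr_diag_mx.
have E_ge0 j : 0 <= map_mx GRing.inv d 0 j by rewrite mxE invr_ge0.
have := mxtrace_psd_congr_ge0 (1%:M - D *m Q) E_ge0.
by rewrite MT sub_pinv_factor // mulmxBr linearB subr_ge0.
Qed.

Lemma orthogonal_bessel (d : 'rV[R]_n) k (X : 'M[R]_(k, n)) (s : 'rV[R]_k) :
  (forall j, 0 <= d 0 j) -> (forall i j, d 0 i = 0 -> G i j = 0) ->
  X *m diag_mx d *m X^T = diag_mx s ->
  \sum_i (X *m G *m X^T) i i / s 0 i <= \sum_j G j j / d 0 j.
Proof.
move=> d_ge0 Gd XDX; set P := supp_mx d.
have PGP : P *m G *m P = G.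
  apply/matrixP => i j; rewrite mul_mx_diag mul_diag_mx !mxE.
  have [di0|] := eqVneq (d 0 i) 0; first by rewrite (Gd _ _ di0) !(mulr0, mul0r).
  have [dj0|] := eqVneq (d 0 j) 0; last by rewrite mulr1 mul1r.
  by rewrite -[in RHS]symG mxE Gd // mulr0.
have conjP A : P *m A *m P = A -> (X *m P) *m A *m (X *m P)^T = X *m A *m X^T.
  by move=> PAP; rewrite trmx_mul tr_diag_mx -[in RHS]PAP !mulmxA.
have := @mxtrace_pinv_proj_le d k (X *m P) s d_ge0.
rewrite -mulmxA supp_mx_idem conjP ?supp_diag_mx ?diag_supp_mx // => /(_ erefl XDX).
rewrite mxtrace_mul_tr_diag conjP // /mxtrace.
by congr (_ <= _); apply: eq_bigr => i _; rewrite ?mul_mx_diag !mxE.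
Qed.

Lemma diagm_posdef_on beta U :
  posdef_on (beta *: G - diagm G) U -> posdef_on (diagm G) U.
Proof.
move=> posU u uU u_neq0; have := posU u uU u_neq0; rewrite bformBZ subr_gt0 => ltDG.
rewrite lt_def diagm_psd andbT; apply: contraTneq ltDG => D0.
by rewrite D0 (bform_diagm_eq0 D0) mulr0 ltxx.
Qed.

Lemma dim_posdef_le beta U : 0 < beta ->
  posdef_on (beta *: G - diagm G) U -> (\dim U)%:R <= beta * n%:R.
Proof.
move=> beta_gt0 posU; set D := diagm G.
have symD : D^T = D by exact: tr_diag_mx.
have [s [size_s sU s_neq0 orth_s]] := orthogonal_family symD (leqnn (\dim U)).
pose X := \matrix_(i < \dim U) s`_i.
have bessel := orthogonal_bessel (d := \row_i G i i) _ _
  (gram_pairwise_orthogonal symD size_s orth_s).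
have lower : (\dim U)%:R / beta <=
    \sum_i (X *m G *m X^T) i i / (\row_i bform D s`_i s`_i) 0 i.
  have -> : (\dim U)%:R / beta = \sum_(i < \dim U) beta^-1.
    by rewrite sumr_const card_ord mulr_natl.
  apply: ler_sum => i _; rewrite mulmx_trE rowK mxE.
  have si_in : s`_i \in s by rewrite mem_nth ?size_s.
  have si_neq0 : s`_i != 0 by apply: contraNneq s_neq0 => <-.
  have := posU _ (sU _ si_in) si_neq0; rewrite bformBZ subr_gt0 => ltDG.
  have Dpos := diagm_posdef_on posU (sU _ si_in) si_neq0.
  by rewrite ler_pdivlMr // mulrC ler_pdivrMr // mulrC ltW.
have upper : \sum_j G j j / (\row_i G i i) 0 j <= n%:R.
  have <- : \sum_(j < n) (1 : R) = n%:R by rewrite sumr_const card_ord.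
  apply: ler_sum => j _.
  by rewrite mxE; have [->|/divff ->] := eqVneq (G j j) 0; rewrite ?mul0r.
rewrite -ler_pdivrMl // mulrC; apply: le_trans lower (le_trans (bessel _ _) upper).
- by move=> j; rewrite mxE psd_diag_ge0.
- by move=> i j; rewrite mxE => /psd_diag_eq0; apply.
Qed.

End PositiveSemidefinite.

Theorem lemma13 (R : realType) (n : nat) (G : 'M[R]_n) (beta : R) :
  psd G -> 0 < beta -> beta <= 1 ->
  exists W : {vspace 'rV[R]_n},
    (1 - beta) * n%:R <= (\dim W)%:R /\
    forall w : 'rV[R]_n, w \in W -> qform G w <= beta^-1 * qform (diagm G) w.
Proof.
move=> [symG psdG] beta_gt0 _.
have symB : (beta *: G - diagm G)^T = beta *: G - diagm G.
  by rewrite linearB linearZ /= symG tr_diag_mx.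
have [U [W [posU nonposW dimUW]]] := posdef_nonpos_split symB.
have dimU := dim_posdef_le symG psdG beta_gt0 posU.
exists W; split.
  have : n%:R <= (\dim U)%:R + (\dim W)%:R :> R by rewrite -natrD ler_nat.
  lra.
move=> w /nonposW; rewrite bformBZ subr_le0 !qformE => le_Gw.
by rewrite -(ler_pM2l beta_gt0) mulrA mulfV ?gt_eqF // mul1r.
Qed.
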